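(* Let $n>24$, $0<\epsilon<\frac13$, $\delta>0$, and $m=\epsilon^{-2}n^{1+\delta}$ (assumed to be an integer). Then $$\mathsf P\left\{\left|\sum_{i=1}^n \frac{k_i(x)(k_i(x)-1)}{m(m-1)}\cdot\frac{1}{\|p\|^2}-1\right|\le 22\,\epsilon\right\}\ \ge\ 1-\frac{10}{9}e^{-n^{\delta}}.$$
   Context: Standing setup: $U$ is a finite set (the key space) with a probability measure $q$; $T=\{1,\dots,n\}$; $h:U\to T$ is an arbitrary function. $p_i=\sum_{u\in h^{-1}(i)}q(u)$ and $\|p\|^2=\sum_{i=1}^n p_i^2$. $U^m$ carries the product measure $q^m$, and $\mathsf P$ denotes probability under $q^m$ of the event for $x=(x_1,\dots,x_m)\in U^m$. $k_i(x)=|\{j: h(x_j)=i\}|$. *)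

From HB Require Import structures.
From mathcomp Require Import all_boot all_order all_algebra.
From mathcomp Require Import reals sequences exp.
Set Implicit Arguments. Unset Strict Implicit. Unset Printing Implicit Defensive.
Import Order.TTheory GRing.Theory Num.Theory.
Local Open Scope ring_scope.

Section HashDefs.
Variables (R : realType) (U : finType) (q : U -> R) (n : nat) (h : U -> 'I_n).

Definition pmass (i : 'I_n) : R := \sum_(u | h u == i) q u.

Definition pnorm2 : R := \sum_(i < n) pmass i ^+ 2.

Definition kcount (m : nat) (x : {ffun 'I_m -> U}) (i : 'I_n) : nat :=
  #|[set j : 'I_m | h (x j) == i]|.

Definition prodprob (m : nat) (E : pred {ffun 'I_m -> U}) : R :=
  \sum_(x : {ffun 'I_m -> U} | E x) \prod_(j < m) q (x j).
End HashDefs.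

From HB Require Import structures.
From mathcomp Require Import all_boot all_order all_algebra.
From mathcomp Require Import reals sequences exp.
From mathcomp Require Import ring lra.
Set Implicit Arguments. Unset Strict Implicit. Unset Printing Implicit Defensive.
Import Order.TTheory GRing.Theory Num.Theory.
Local Open Scope ring_scope.

(* Write [k_i = m p_i + v_i].  Then [sum_i k_i (k_i - 1) = sum_i v_i^2 + 2 m D + m^2 ||p||^2 - m]
   with [D = sum_j (p_(h x_j) - ||p||^2)], a sum of [m] i.i.d. centred terms of size at most
   [||p||].  A Chernoff bound gives [|D| < 19/5 eps m ||p||^2] outside probability
   [2 e^(-23/10 t)], where [t = n^delta].  For the quadratic term, [prod_i cosh (s v_i)] is the
   average over sign vectors [e] of [exp (s sum_i e_i v_i)], and each [sum_i e_i v_i] is again a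
   sum of [m] i.i.d. bounded centred terms; Markov's inequality then gives
   [sum_i v_i^2 < 36 m t] outside probability [e^(-12/5 t)].  Since [eps^2 m = n t] and
   [n ||p||^2 >= 1], both error terms are [O(eps m^2 ||p||^2)]. *)

Section ExpInequalities.
Variable R : realType.

Definition cosh (a : R) : R := (expR a + expR (- a)) / 2.

Lemma expR_le_inv1B (z : R) : z < 1 -> expR z <= (1 - z)^-1.
Proof.
move=> z_lt1; rewrite -[expR z]invrK -expRN lef_pV2 ?posrE ?expR_gt0 ?subr_gt0 //.
by have := expR_ge1Dx (- z).
Qed.

Lemma sqr_1Dhalf_le_expR (b : R) : 0 <= 1 + b / 2 -> (1 + b / 2) ^+ 2 <= expR b.
Proof.
move=> hb; have -> : expR b = expR (b / 2) ^+ 2.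
  by rewrite -expRM_natl; congr expR; field.
by rewrite ler_sqr ?nnegrE ?expR_ge0 // expR_ge1Dx.
Qed.

Lemma cosh_ge_1Dsqr (b : R) : `|b| <= 2 -> 1 + b ^+ 2 / 4 <= cosh b.
Proof.
move=> /ler_normlP[hNb hb].
have e1 := @sqr_1Dhalf_le_expR b ltac:(lra).
have e2 := @sqr_1Dhalf_le_expR (- b) ltac:(lra).
have : ((1 + b / 2) ^+ 2 + (1 + - b / 2) ^+ 2) / 2 = 1 + b ^+ 2 / 4 by field.
rewrite /cosh; lra.
Qed.

Lemma expR_le_cosh_small (b : R) : 0 <= b <= 3 / 2 -> expR (b ^+ 2 / (5 + b)) <= cosh b.
Proof.
move=> /andP[b_ge0 b_le].
set z := b ^+ 2 / (5 + b).
have b5_gt0 : 0 < 5 + b by lra.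
have hz : z * (5 + b) = b ^+ 2 by rewrite mulfVK ?gt_eqF.
have hb2 : b ^+ 2 <= 9 / 4 by rewrite expr2; nra.
have z_lt1 : z < 1 by rewrite -(ltr_pM2r b5_gt0) hz mul1r; lra.
apply: (le_trans (expR_le_inv1B z_lt1)).
apply: le_trans (cosh_ge_1Dsqr _); last by rewrite ger0_norm //; lra.
have z1_gt0 : 0 < 1 - z by rewrite subr_gt0.
rewrite -(ler_pM2l z1_gt0) mulfV ?gt_eqF // -subr_ge0 -(pmulr_lge0 _ b5_gt0).
have -> : ((1 - z) * (1 + b ^+ 2 / 4) - 1) * (5 + b) = b ^+ 2 * (1 + b - b ^+ 2) / 4.
  have -> : ((1 - z) * (1 + b ^+ 2 / 4) - 1) * (5 + b) =
     (5 + b) * (b ^+ 2 / 4) - (z * (5 + b)) * (1 + b ^+ 2 / 4) by ring.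
  by rewrite hz; field.
by rewrite divr_ge0 // mulr_ge0 ?sqr_ge0 //; rewrite expr2; nra.
Qed.

Lemma expR_le_cosh_large (b : R) : 3 / 2 <= b -> expR (b ^+ 2 / (5 + b)) <= cosh b.
Proof.
move=> b_ge.
set z := b ^+ 2 / (5 + b).
have b5_gt0 : 0 < 5 + b by lra.
have hz : z * (5 + b) = b ^+ 2 by rewrite mulfVK ?gt_eqF.
have bz_ge1 : 1 <= b - z.
  rewrite -subr_ge0 -(pmulr_lge0 _ b5_gt0).
  have -> : (b - z - 1) * (5 + b) = 5 * b + b ^+ 2 - z * (5 + b) - 5 - b by ring.
  rewrite hz; lra.
have e_ge2 : 2 <= expR (b - z).
  by have := expR_ge1Dx (b - z); have := expR_ge1Dx 1; lra.
have : 2 * expR z <= expR (b - z) * expR z by rewrite ler_wpM2r ?expR_ge0.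
rewrite -expRD subrK /cosh; have := expR_ge0 (- b); lra.
Qed.

Lemma expR_le_cosh_nonneg (b : R) : 0 <= b -> expR (b ^+ 2 / (5 + b)) <= cosh b.
Proof.
move=> b_ge0; have [b_le|b_gt] := leP b (3 / 2).
  by apply: expR_le_cosh_small; rewrite b_ge0 b_le.
exact/expR_le_cosh_large/ltW.
Qed.

Lemma coshN (a : R) : cosh (- a) = cosh a.
Proof. by rewrite /cosh opprK addrC. Qed.

Lemma expR_le_cosh (a : R) : expR (a ^+ 2 / (5 + `|a|)) <= cosh a.
Proof.
have [a_ge0|a_lt0] := leP 0 a; first by rewrite ger0_norm // expR_le_cosh_nonneg.
rewrite -coshN -sqrrN ltr0_norm //; apply: expR_le_cosh_nonneg; lra.
Qed.

Lemma prod_cosh_ge (n : nat) (a : 'I_n -> R) (T : R) :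
  1 <= T -> (12 * T) ^+ 2 <= \sum_(i < n) a i ^+ 2 ->
  expR (8 * T) <= \prod_(i < n) cosh (a i).
Proof.
move=> T_ge1 hS.
set S := \sum_(i < n) a i ^+ 2 in hS *.
set N := Num.sqrt S.
have N_ge0 : 0 <= N by apply: sqrtr_ge0.
have NS : N ^+ 2 = S by rewrite sqr_sqrtr // (le_trans _ hS) ?sqr_ge0.
have a_le i : `|a i| <= N.
  rewrite -sqrtr_sqr ler_wsqrtr // /S (bigD1 i) //= lerDl.
  by apply: sumr_ge0 => j _; apply: sqr_ge0.
apply: (@le_trans _ _ (expR (\sum_(i < n) a i ^+ 2 / (5 + `|a i|)))); last first.
  by rewrite expR_sum; apply: ler_prod => i _; rewrite expR_ge0 expR_le_cosh.
rewrite ler_expR; apply: (@le_trans _ _ (S / (5 + N))).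
  have N_ge : 12 * T <= N by rewrite -ler_sqr ?nnegrE // ?NS //; lra.
  rewrite ler_pdivlMr; last lra.
  have : 0 <= (N - 12 * T) * (N + 4 * T) by apply: mulr_ge0; lra.
  have : 0 <= T * (T - 1) by apply: mulr_ge0; lra.
  rewrite -NS; nra.
rewrite /S mulr_suml; apply: ler_sum => i _; apply: ler_wpM2l; first exact: sqr_ge0.
by rewrite lef_pV2 ?posrE ?lerD2l //; have := normr_ge0 (a i); lra.
Qed.

Lemma expR_le_quadratic (g y : R) : 1 < g -> g * y <= g - 1 -> expR y <= 1 + y + g * y ^+ 2.
Proof.
move=> g_gt1 hy.
have y_lt1 : y < 1.
  by rewrite -(ltr_pM2l (lt_trans ltr01 g_gt1)) mulr1; apply: le_lt_trans hy _; lra.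
apply: (le_trans (expR_le_inv1B y_lt1)).
have y1_gt0 : 0 < 1 - y by rewrite subr_gt0.
rewrite -(ler_pM2l y1_gt0) mulfV ?gt_eqF // -subr_ge0.
have -> : (1 - y) * (1 + y + g * y ^+ 2) - 1 = y ^+ 2 * (g - 1 - g * y) by ring.
by rewrite mulr_ge0 ?sqr_ge0 ?subr_ge0.
Qed.

Lemma prod_cosh_sum_signs (n : nat) (a : 'I_n -> R) :
  \prod_(i < n) cosh (a i) =
  (\sum_(e : {ffun 'I_n -> bool}) expR (\sum_(i < n) (-1) ^+ e i * a i)) / 2 ^+ n.
Proof.
transitivity (\prod_(i < n) \sum_(b : bool) expR ((-1) ^+ b * a i) / 2).
  by apply: eq_bigr => i _; rewrite big_bool /= expr1 expr0 mulN1r mul1r /cosh mulrDl addrC.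
rewrite bigA_distr_bigA mulr_suml; apply: eq_bigr => e _.
by rewrite big_split /= expR_sum prodr_const card_ord exprVn.
Qed.

Lemma expR_tails_le (t : R) : 1 <= t ->
  2 * expR (- (23 / 10 * t)) + expR (- (12 / 5 * t)) <= 10 / 9 * expR (- t).
Proof.
move=> t_ge1.
have tail_le : expR (- (12 / 5 * t)) <= expR (- (23 / 10 * t)) by rewrite ler_expR; lra.
have split_tail : expR (- (23 / 10 * t)) = expR (- t) * expR (- (13 / 10 * t)).
  by rewrite -expRD; congr expR; lra.
(* e^{13/10} >= (1 + 13/20)^2 = 1089/400, and 3 * 400/1089 <= 10/9 *)
have small : expR (- (13 / 10 * t)) <= 400 / 1089.
  apply: (@le_trans _ _ (expR (- (13 / 10)))); first by rewrite ler_expR; lra.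
  have : expR (- (13 / 10)) * expR (13 / 10 : R) = 1 by rewrite -expRD addNr expR0.
  have := @sqr_1Dhalf_le_expR (13 / 10) ltac:(lra).
  have := expR_gt0 (- (13 / 10) : R).
  nra.
have := expR_ge0 (- t); nra.
Qed.

End ExpInequalities.

Section ProductMeasure.
Variables (R : realType) (U : finType) (q : U -> R).
Hypotheses (q_ge0 : forall u, 0 <= q u) (sum_q : \sum_u q u = 1).
Variable m : nat.

Definition wt (x : {ffun 'I_m -> U}) : R := \prod_(j < m) q (x j).

Lemma wt_ge0 x : 0 <= wt x.
Proof. by apply: prodr_ge0 => j _; apply: q_ge0. Qed.

Lemma sum_wt_expR (f : U -> R) :
  \sum_x wt x * expR (\sum_(j < m) f (x j)) = (\sum_u q u * expR (f u)) ^+ m.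
Proof.
rewrite -[in RHS](card_ord m) -prodr_const bigA_distr_bigA.
by apply: eq_bigr => x _; rewrite expR_sum -big_split.
Qed.

Lemma sum_wt : \sum_x wt x = 1.
Proof.
rewrite -(bigA_distr_bigA (fun _ : 'I_m => q)) /=.
by apply: big1 => j _; apply: sum_q.
Qed.

Lemma prodprob_ge_1Bmean (E : pred {ffun 'I_m -> U}) (w : {ffun 'I_m -> U} -> R) :
  (forall x, 0 <= w x) -> (forall x, ~~ E x -> 1 <= w x) ->
  1 - \sum_x wt x * w x <= prodprob q E.
Proof.
move=> w_ge0 w_ge1.
rewrite /prodprob -/(wt _) lerBlDr -{1}sum_wt (bigID E) /= lerD2l.
apply: (@le_trans _ _ (\sum_(x | ~~ E x) wt x * w x)).
  by apply: ler_sum => x Ex; rewrite ler_peMr ?wt_ge0 ?w_ge1.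
rewrite [leRHS](bigID (fun x => ~~ E x)) /= lerDl.
by apply: sumr_ge0 => x _; rewrite mulr_ge0 ?wt_ge0.
Qed.

Lemma mean_expR_centered_le (g : U -> R) (b gam la : R) :
  \sum_u q u * g u = b -> 1 < gam -> (forall u, gam * (la * (g u - b)) <= gam - 1) ->
  \sum_u q u * expR (la * (g u - b)) <= expR (gam * la ^+ 2 * \sum_u q u * g u ^+ 2).
Proof.
move=> mean_g gam_gt1 g_le.
apply: (@le_trans _ _ (\sum_u q u * (1 + la * (g u - b) + gam * (la * (g u - b)) ^+ 2))).
  by apply: ler_sum => u _; rewrite ler_wpM2l ?expR_le_quadratic.
set v := gam * la ^+ 2.
have -> : \sum_u q u * (1 + la * (g u - b) + gam * (la * (g u - b)) ^+ 2) =
    (1 - la * b + v * b ^+ 2) * \sum_u q u + (la - 2 * v * b) * \sum_u q u * g u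
    + v * \sum_u q u * g u ^+ 2.
  by rewrite !mulr_sumr -!big_split /=; apply: eq_bigr => u _; rewrite /v; ring.
rewrite sum_q mean_g; apply: le_trans (expR_ge1Dx _).
have : 0 <= v * b ^+ 2 by rewrite mulr_ge0 ?sqr_ge0 // mulr_ge0 ?sqr_ge0 //; lra.
lra.
Qed.

Lemma chernoff_sum_le (g : U -> R) (b gam la K v : R) :
  \sum_u q u * g u = b -> 1 < gam -> (forall u, gam * (la * (g u - b)) <= gam - 1) ->
  \sum_u q u * g u ^+ 2 <= v ->
  \sum_x wt x * expR (la * \sum_(j < m) (g (x j) - b) - K) <=
  expR (m%:R * gam * la ^+ 2 * v - K).
Proof.
move=> mean_g gam_gt1 g_le var_g.
have -> : \sum_x wt x * expR (la * \sum_(j < m) (g (x j) - b) - K) =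
    (\sum_x wt x * expR (\sum_(j < m) la * (g (x j) - b))) * expR (- K).
  by rewrite mulr_suml; apply: eq_bigr => x _; rewrite -mulrA -expRD mulr_sumr.
have -> : m%:R * gam * la ^+ 2 * v - K = m%:R * (gam * la ^+ 2 * v) + - K by ring.
rewrite (sum_wt_expR (fun u => la * (g u - b))) expRD expRM_natl.
rewrite ler_wpM2r ?expR_ge0 // lerXn2r ?nnegrE ?expR_ge0 //.
  by apply: sumr_ge0 => u _; rewrite mulr_ge0 ?expR_ge0.
apply: (le_trans (mean_expR_centered_le mean_g gam_gt1 g_le)).
by rewrite ler_expR ler_wpM2l // mulr_ge0 ?sqr_ge0 //; lra.
Qed.

End ProductMeasure.

Section Hashing.
Variables (R : realType) (U : finType) (q : U -> R).
Hypotheses (q_ge0 : forall u, 0 <= q u) (sum_q : \sum_u q u = 1).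
Variables (n : nat) (h : U -> 'I_n).
Local Notation p := (pmass q h).
Local Notation mu := (pnorm2 q h).

Lemma sum_comp_h (g : 'I_n -> R) : \sum_u q u * g (h u) = \sum_(i < n) p i * g i.
Proof.
rewrite (partition_big h xpredT) //=; apply: eq_bigr => i _.
by rewrite /pmass mulr_suml; apply: eq_bigr => u /eqP ->.
Qed.

Lemma pmass_ge0 i : 0 <= p i.
Proof. by apply: sumr_ge0 => u _; apply: q_ge0. Qed.

Lemma sum_pmass : \sum_(i < n) p i = 1.
Proof.
rewrite -sum_q; have := sum_comp_h (fun _ => 1).
by under eq_bigr do rewrite mulr1; under [in RHS]eq_bigr do rewrite mulr1.
Qed.

Lemma mean_pmass_comp_h : \sum_u q u * p (h u) = mu.
Proof. by rewrite sum_comp_h; apply: eq_bigr => i _; rewrite expr2. Qed.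

Lemma pmass_sqr_le_pnorm2 i : p i ^+ 2 <= mu.
Proof.
by rewrite /pnorm2 (bigD1 i) //= lerDl; apply: sumr_ge0 => j _; apply: sqr_ge0.
Qed.

Lemma pnorm2_le1 : mu <= 1.
Proof.
rewrite -sum_pmass; apply: ler_sum => i _; rewrite expr2 ler_piMr ?pmass_ge0 //.
by rewrite -sum_pmass (bigD1 i) //= lerDl; apply: sumr_ge0 => j _; apply: pmass_ge0.
Qed.

(* [||p||^2 - 1/n] is the squared distance from [p] to the uniform distribution *)
Lemma pnorm2_ge_inv : (0 < n)%N -> 1 <= n%:R * mu.
Proof.
move=> n_gt0; have n_gt0R : 0 < n%:R :> R by rewrite ltr0n.
have dist_unif : \sum_(i < n) (p i - n%:R^-1) ^+ 2 = mu - n%:R^-1.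
  transitivity (\sum_(i < n) (p i ^+ 2 + (- 2 * n%:R^-1 * p i + n%:R^-1 ^+ 2))).
    by apply: eq_bigr => i _; ring.
  rewrite !big_split /= -mulr_sumr sum_pmass sumr_const card_ord -mulr_natr.
  by rewrite /pnorm2; field; rewrite gt_eqF.
have : 0 <= mu - n%:R^-1 by rewrite -dist_unif sumr_ge0 // => i _; apply: sqr_ge0.
by rewrite subr_ge0 -(ler_pM2l n_gt0R) mulfV ?gt_eqF.
Qed.

Lemma sum_kcount_mul m (c : 'I_n -> R) (x : {ffun 'I_m -> U}) :
  \sum_(i < n) c i * (kcount h x i)%:R = \sum_(j < m) c (h (x j)).
Proof.
rewrite [RHS](partition_big (fun j => h (x j)) xpredT) //=.
apply: eq_bigr => i _; rewrite (eq_bigr (fun _ => c i)); last by move=> j /eqP ->.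
rewrite sumr_const /kcount -[in RHS]cardsE mulr_natr.
by congr (_ *+ #|_|); apply/setP => j; rewrite !inE.
Qed.

Lemma natr_mul_subn1 (c : nat) : ((c * (c - 1))%:R : R) = c%:R * (c%:R - 1).
Proof. by case: c => [|c]; rewrite ?mul0r // natrM subn1 /= -addn1 natrD addrK. Qed.

Lemma sum_kcount_pairs m (x : {ffun 'I_m -> U}) :
  \sum_(i < n) ((kcount h x i * (kcount h x i - 1))%:R : R) =
  \sum_(i < n) ((kcount h x i)%:R - m%:R * p i) ^+ 2
  + 2 * m%:R * \sum_(j < m) (p (h (x j)) - mu) + m%:R ^+ 2 * mu - m%:R.
Proof.
set k := fun i => (kcount h x i)%:R : R.
have sum_k : \sum_(i < n) k i = m%:R.
  have := sum_kcount_mul (fun _ => 1) x; rewrite sumr_const card_ord => <-.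
  by apply: eq_bigr => i _; rewrite mul1r.
have sum_pk : \sum_(i < n) p i * k i = \sum_(j < m) p (h (x j)) by apply: sum_kcount_mul.
have -> : \sum_(i < n) ((kcount h x i * (kcount h x i - 1))%:R : R) =
    \sum_(i < n) k i ^+ 2 - \sum_(i < n) k i.
  by rewrite -sumrB; apply: eq_bigr => i _; rewrite natr_mul_subn1 /k; ring.
have -> : \sum_(i < n) (k i - m%:R * p i) ^+ 2 =
    \sum_(i < n) k i ^+ 2 - 2 * m%:R * \sum_(i < n) p i * k i + m%:R ^+ 2 * mu.
  transitivity (\sum_(i < n) (k i ^+ 2 + (- (2 * m%:R) * (p i * k i) + m%:R ^+ 2 * p i ^+ 2))).
    by apply: eq_bigr => i _; ring.
  by rewrite !big_split /= -!mulr_sumr /pnorm2; ring.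
rewrite sumrB sumr_const card_ord mulr_natl sum_k sum_pk; ring.
Qed.

End Hashing.

Lemma collision_ratio_close (R : realType) (X Q D m mu eps t n : R) :
  X = Q + 2 * m * D + m ^+ 2 * mu - m ->
  0 <= Q -> Q < 36 * m * t -> `|D| < 19 / 5 * eps * m * mu ->
  0 < eps -> eps < 1 / 3 -> 0 < mu -> mu <= 1 -> 1 <= n * mu -> 1 <= t ->
  eps ^+ 2 * m = n * t -> 10 <= m ->
  `| X / (m * (m - 1)) * mu^-1 - 1 | <= 22 * eps.
Proof.
move=> -> Q_ge0 Q_lt /ltr_normlP[hD1 hD2] eps_gt0 eps_lt mu_gt0 mu_le1 n_mu_ge1 t_ge1 eps2m
  m_ge10.
have denom_gt0 : 0 < m * (m - 1) * mu by rewrite !mulr_gt0 //; lra.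
have -> : (Q + 2 * m * D + m ^+ 2 * mu - m) / (m * (m - 1)) * mu^-1 - 1 =
    (Q + 2 * m * D + m * mu - m) / (m * (m - 1) * mu).
  by field; rewrite !gt_eqF //; lra.
set Z := eps * m * mu.
have Z_ge0 : 0 <= Z by rewrite !mulr_ge0 //; lra.
(* both [t] and [1] are at most [eps * Z] because [eps * Z = n * mu * t] *)
have epsZ : eps * Z = n * t * mu by rewrite /Z -eps2m; ring.
have t_le : t <= eps * Z.
  have : t * 1 <= t * (n * mu) by rewrite ler_wpM2l //; lra.
  lra.
have one_le : 1 <= eps * Z by apply: le_trans t_le.
have epsZ_le : eps * Z <= Z / 3.
  have : eps * Z <= (1 / 3) * Z by rewrite ler_wpM2r //; lra.
  lra.
have p1 : m * t <= m * (Z / 3) by rewrite ler_wpM2l //; lra.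
have p2 : m * 1 <= m * (Z / 3) by rewrite ler_wpM2l //; lra.
have p3 : m * D <= m * (19 / 5 * Z) by rewrite ler_wpM2l //; rewrite /Z; lra.
have p4 : m * (- D) <= m * (19 / 5 * Z) by rewrite ler_wpM2l //; rewrite /Z; lra.
have p5 : m * mu <= m * 1 by rewrite ler_wpM2l //; lra.
have p6 : 0 <= (m - 10) * Z by rewrite mulr_ge0 //; lra.
rewrite ler_norml ler_pdivrMr // ler_pdivlMr //; apply/andP.
by split; rewrite /Z in p1 p2 p3 p4 p6 *; nra.
Qed.

Section CollisionEstimate.
Variables (R : realType) (U : finType) (q : U -> R).
Hypotheses (q_ge0 : forall u, 0 <= q u) (sum_q : \sum_u q u = 1).
Variables (n : nat) (h : U -> 'I_n) (m : nat) (eps t : R).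
Hypotheses (n_gt24 : (24 < n)%N) (eps_gt0 : 0 < eps) (eps_lt : eps < 1 / 3)
  (t_ge1 : 1 <= t) (eps2m : eps ^+ 2 * m%:R = n%:R * t).
Local Notation p := (pmass q h).
Local Notation mu := (pnorm2 q h).
Local Notation wt := (@wt R U q m).

Definition lin_dev (x : {ffun 'I_m -> U}) : R := \sum_(j < m) (p (h (x j)) - mu).

Definition quad_dev (x : {ffun 'I_m -> U}) : R :=
  \sum_(i < n) ((kcount h x i)%:R - m%:R * p i) ^+ 2.

Definition good_estimate (x : {ffun 'I_m -> U}) : bool :=
  `| \sum_(i < n) ((kcount h x i * (kcount h x i - 1))%:R / (m%:R * (m%:R - 1))) * mu^-1 - 1 |
    <= 22 * eps.

Lemma n_mu_ge1 : 1 <= n%:R * mu.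
Proof. by apply: pnorm2_ge_inv => //; apply: leq_ltn_trans n_gt24. Qed.

Lemma pnorm2_gt0 : 0 < mu.
Proof.
rewrite lt_def sumr_ge0 ?andbT => [|i _]; last exact: sqr_ge0.
by apply/eqP => mu0; have := n_mu_ge1; rewrite mu0 mulr0; lra.
Qed.

Lemma m_ge225t : 225 * t <= m%:R.
Proof.
have eps2_le : eps ^+ 2 <= 1 / 9.
  have : eps * eps <= 1 / 3 * (1 / 3) by apply: ler_pM; rewrite ?ltW.
  by rewrite expr2; lra.
have n_ge25 : 25 <= n%:R :> R by rewrite (ler_nat R 25).
have : eps ^+ 2 * m%:R <= 1 / 9 * m%:R by rewrite ler_wpM2r.
have : 25 * t <= n%:R * t by rewrite ler_wpM2r // (le_trans ler01 t_ge1).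
by move: eps2m; lra.
Qed.

Let c := 19 / 5 * eps * m%:R * mu.

Lemma collision_close_of_small_dev x :
  `|lin_dev x| < c -> quad_dev x < 36 * m%:R * t -> good_estimate x.
Proof.
move=> lin_small quad_small; rewrite /good_estimate -!mulr_suml.
apply: (collision_ratio_close (sum_kcount_pairs q h x) _ quad_small lin_small) => //.
- by apply: sumr_ge0 => i _; apply: sqr_ge0.
- exact: pnorm2_gt0.
- exact: pnorm2_le1.
- exact: n_mu_ge1.
- exact: eps2m.
- by have := m_ge225t; have := t_ge1; lra.
Qed.

Let r := Num.sqrt mu.
Let la := eps / r.

Lemma sqrt_pnorm2_gt0 : 0 < r.
Proof. by rewrite sqrtr_gt0 pnorm2_gt0. Qed.

Lemma sqr_sqrt_pnorm2 : r ^+ 2 = mu.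
Proof. by rewrite sqr_sqrtr // ltW // pnorm2_gt0. Qed.

Lemma pnorm2_le_sqrt : mu <= r.
Proof.
have r_le1 : r <= 1 by rewrite -sqrtr1 ler_wsqrtr // pnorm2_le1.
by rewrite -sqr_sqrt_pnorm2 expr2 ler_piMl // ltW // sqrt_pnorm2_gt0.
Qed.

Lemma pmass_le_sqrt i : p i <= r.
Proof.
rewrite -ler_sqr ?nnegrE ?(pmass_ge0 q_ge0) ?sqrtr_ge0 // sqr_sqrt_pnorm2.
exact: pmass_sqr_le_pnorm2.
Qed.

Definition lin_witness (b : bool) (x : {ffun 'I_m -> U}) : R :=
  expR (la * ((-1) ^+ b * lin_dev x - c)).

Lemma lin_witness_ge1 (b : bool) x : c <= (-1) ^+ b * lin_dev x -> 1 <= lin_witness b x.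
Proof.
move=> dev_ge; rewrite -expR0 ler_expR mulr_ge0 ?subr_ge0 //.
by rewrite divr_ge0 ?ltW ?sqrt_pnorm2_gt0.
Qed.

Lemma mean_lin_witness_le (b : bool) : \sum_x wt x * lin_witness b x <= expR (- (23 / 10 * t)).
Proof.
pose g u := (-1) ^+ b * p (h u).
have r_gt0 := sqrt_pnorm2_gt0.
have mean_g : \sum_u q u * g u = (-1) ^+ b * mu.
  by rewrite -mean_pmass_comp_h mulr_sumr; apply: eq_bigr => u _; rewrite /g mulrCA.
have la_ge0 : 0 <= la by rewrite divr_ge0 ?ltW.
have la_r : la * r = eps by rewrite /la divfK ?gt_eqF.
have g_dev u : 3 / 2 * (la * (g u - (-1) ^+ b * mu)) <= 3 / 2 - 1.
  have : la * (g u - (-1) ^+ b * mu) <= la * r.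
    rewrite /g -mulrBr ler_wpM2l // (le_trans (ler_norm _)) // normrM normr_sign mul1r.
    rewrite ler_norml; have := pmass_le_sqrt (h u); have := pmass_ge0 q_ge0 h (h u).
    by have := pnorm2_le_sqrt; have := pnorm2_gt0; lra.
  by have := eps_lt; lra.
have var_g : \sum_u q u * g u ^+ 2 <= r * mu.
  rewrite -mean_pmass_comp_h mulr_sumr; apply: ler_sum => u _.
  rewrite /g exprMn sqrr_sign mul1r expr2 mulrCA.
  by rewrite ler_wpM2r ?mulr_ge0 ?(pmass_ge0 q_ge0) ?pmass_le_sqrt.
have gam_gt1 : 1 < 3 / 2 :> R by rewrite ltr_pdivlMr // mul1r ltr_nat.
have dev_sum x : (-1) ^+ b * lin_dev x = \sum_(j < m) (g (x j) - (-1) ^+ b * mu).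
  by rewrite /lin_dev mulr_sumr; apply: eq_bigr => j _; rewrite mulrBr.
rewrite /lin_witness; under eq_bigr => x _ do rewrite dev_sum mulrBr.
apply: (le_trans (chernoff_sum_le q_ge0 sum_q m (la * c) mean_g gam_gt1 g_dev var_g)).
rewrite ler_expR.
(* the variance term and the shift [la * c] are both multiples of [eps ^+ 2 * m * r = n * t * r] *)
have mu_r : mu = r * r by rewrite -expr2 sqr_sqrt_pnorm2.
have -> : m%:R * (3 / 2) * la ^+ 2 * (r * mu) - la * c = - (23 / 10) * (eps ^+ 2 * m%:R * r).
  by rewrite /c /la mu_r; field; rewrite gt_eqF.
rewrite eps2m.
have n_r_ge1 : 1 <= n%:R * r by apply: (le_trans n_mu_ge1); rewrite ler_wpM2l ?pnorm2_le_sqrt.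
rewrite mulNr lerN2 ler_pM2l; last lra.
by rewrite mulrAC ler_peMl // (le_trans ler01 t_ge1).
Qed.

Let s := Num.sqrt (4 * t / m%:R).

Lemma m_gt0 : 0 < m%:R :> R.
Proof. by apply: lt_le_trans m_ge225t; rewrite mulr_gt0 // (lt_le_trans ltr01 t_ge1). Qed.

Lemma sqr_s_mul_m : s ^+ 2 * m%:R = 4 * t.
Proof.
have t_ge0 : 0 <= t := le_trans ler01 t_ge1.
by rewrite sqr_sqrtr ?divfK ?gt_eqF ?m_gt0 // divr_ge0 ?mulr_ge0.
Qed.

Lemma s_le17 : s <= 1 / 7.
Proof.
rewrite -ler_sqr ?nnegrE ?sqrtr_ge0 ?divr_ge0 // -(ler_pM2r m_gt0) sqr_s_mul_m.
by have := m_ge225t; have := t_ge1; rewrite expr2; lra.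
Qed.

Definition quad_witness (x : {ffun 'I_m -> U}) : R :=
  expR (- (8 * t)) * \prod_(i < n) cosh (s * ((kcount h x i)%:R - m%:R * p i)).

Lemma quad_witness_ge0 x : 0 <= quad_witness x.
Proof.
apply: mulr_ge0; first exact: expR_ge0.
by apply: prodr_ge0 => i _; rewrite /cosh divr_ge0 ?addr_ge0 ?expR_ge0.
Qed.

Lemma quad_witness_ge1 x : 36 * m%:R * t <= quad_dev x -> 1 <= quad_witness x.
Proof.
move=> Q_ge; rewrite /quad_witness.
apply: (@le_trans _ _ (expR (- (8 * t)) * expR (8 * t))).
  by rewrite -expRD addNr expR0.
rewrite ler_wpM2l ?expR_ge0 //; apply: (prod_cosh_ge t_ge1).
have -> : \sum_(i < n) (s * ((kcount h x i)%:R - m%:R * p i)) ^+ 2 = s ^+ 2 * quad_dev x.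
  by rewrite /quad_dev mulr_sumr; apply: eq_bigr => i _; rewrite exprMn.
apply: (le_trans _ (ler_wpM2l (sqr_ge0 s) Q_ge)).
have -> : s ^+ 2 * (36 * m%:R * t) = (12 * t) ^+ 2.
  by transitivity (36 * t * (s ^+ 2 * m%:R)); [ring | rewrite sqr_s_mul_m; ring].
exact: lexx.
Qed.

(* a sign vector [e] turns the centred counts into a sum of [m] i.i.d. [+-1]-valued terms *)
Lemma mean_expR_signed_dev_le (e : {ffun 'I_n -> bool}) :
  \sum_x wt x * expR (\sum_(i < n) (-1) ^+ e i * (s * ((kcount h x i)%:R - m%:R * p i)))
    <= expR (28 / 5 * t).
Proof.
pose g u : R := (-1) ^+ e (h u).
have g_bnd u : -1 <= g u <= 1.
  by rewrite /g; case: (e (h u)); rewrite /= ?expr1 ?expr0 lexx ?andbT; lra.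
pose b := \sum_u q u * g u.
have b_ge : -1 <= b.
  have : \sum_u q u * -1 <= b.
    by apply: ler_sum => u _; rewrite ler_wpM2l //; case/andP: (g_bnd u).
  by rewrite -mulr_suml sum_q mul1r.
have dev x : \sum_(i < n) (-1) ^+ e i * (s * ((kcount h x i)%:R - m%:R * p i)) =
    s * \sum_(j < m) (g (x j) - b) - 0.
  have Ek : \sum_(j < m) g (x j) = \sum_(i < n) (-1) ^+ e i * (kcount h x i)%:R :=
    esym (sum_kcount_mul h _ x).
  have Eb : b = \sum_(i < n) p i * (-1) ^+ e i := sum_comp_h q h _.
  have Em : \sum_(j < m) b = m%:R * b by rewrite sumr_const card_ord mulr_natl.
  rewrite subr0 sumrB Em Ek Eb mulr_sumr -sumrB mulr_sumr.
  by apply: eq_bigr => i _; ring.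
under eq_bigr do rewrite dev.
have g_dev u : 7 / 5 * (s * (g u - b)) <= 7 / 5 - 1.
  have : s * (g u - b) <= s * 2.
    by rewrite ler_wpM2l ?sqrtr_ge0 //; case/andP: (g_bnd u); lra.
  by have := s_le17; lra.
have var_g : \sum_u q u * g u ^+ 2 <= 1.
  by under eq_bigr => u _ do rewrite /g sqrr_sign mulr1; rewrite sum_q.
have gam_gt1 : 1 < 7 / 5 :> R by rewrite ltr_pdivlMr // mul1r ltr_nat.
apply: (le_trans (chernoff_sum_le q_ge0 sum_q m 0 (erefl b) gam_gt1 g_dev var_g)).
have -> : m%:R * (7 / 5) * s ^+ 2 * 1 - 0 = 7 / 5 * (s ^+ 2 * m%:R) by ring.
by rewrite sqr_s_mul_m ler_expR; lra.
Qed.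

Lemma mean_quad_witness_le : \sum_x wt x * quad_witness x <= expR (- (12 / 5 * t)).
Proof.
pose F (e : {ffun 'I_n -> bool}) (x : {ffun 'I_m -> U}) :=
  expR (\sum_(i < n) (-1) ^+ e i * (s * ((kcount h x i)%:R - m%:R * p i))).
have -> : \sum_x wt x * quad_witness x =
    expR (- (8 * t)) / 2 ^+ n * \sum_(e : {ffun 'I_n -> bool}) \sum_x wt x * F e x.
  transitivity (\sum_x \sum_(e : {ffun 'I_n -> bool}) expR (- (8 * t)) / 2 ^+ n * (wt x * F e x)).
    apply: eq_bigr => x _; rewrite /quad_witness prod_cosh_sum_signs mulr_suml !mulr_sumr.
    by apply: eq_bigr => e _; rewrite /F; ring.
  by rewrite exchange_big mulr_sumr; apply: eq_bigr => e _; rewrite mulr_sumr.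
have sum_le : \sum_(e : {ffun 'I_n -> bool}) \sum_x wt x * F e x <=
    \sum_(e : {ffun 'I_n -> bool}) expR (28 / 5 * t).
  by apply: ler_sum => e _; apply: mean_expR_signed_dev_le.
apply: (le_trans (ler_wpM2l _ sum_le)); first by rewrite divr_ge0 ?expR_ge0 ?exprn_ge0.
rewrite sumr_const card_ffun card_bool card_ord -[_ *+ (2 ^ n)%N]mulr_natr natrX.
by rewrite mulrCA divfK ?expf_neq0 ?pnatr_eq0 // -expRD ler_expR; lra.
Qed.

Definition witness (x : {ffun 'I_m -> U}) : R :=
  lin_witness false x + lin_witness true x + quad_witness x.

Lemma witness_ge0 x : 0 <= witness x.
Proof.
apply: addr_ge0; last exact: quad_witness_ge0.
by apply: addr_ge0; apply: expR_ge0.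
Qed.

Lemma witness_ge1_of_bad x : ~~ good_estimate x -> 1 <= witness x.
Proof.
move=> bad; have lin_ge0 (b : bool) : 0 <= lin_witness b x := expR_ge0 _.
have quad_ge0 := quad_witness_ge0 x.
have [Q_hi|Q_lo] := leP (36 * m%:R * t) (quad_dev x).
  by rewrite /witness ler_wpDl ?addr_ge0 ?quad_witness_ge1.
have [D_hi|D_lo] := leP c (lin_dev x).
  rewrite /witness -addrA ler_wpDr ?addr_ge0 //.
  by rewrite lin_witness_ge1 // expr0 mul1r.
have [D_lo'|D_hi'] := leP c (- lin_dev x).
  rewrite /witness (addrC (lin_witness false x)) -addrA ler_wpDr ?addr_ge0 //.
  by rewrite lin_witness_ge1 // expr1 mulN1r.
by move: bad; rewrite collision_close_of_small_dev // ltr_norml D_lo andbT -ltrNl.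
Qed.

Lemma mean_witness_le : \sum_x wt x * witness x <= 10 / 9 * expR (- t).
Proof.
under eq_bigr do rewrite /witness !mulrDr.
rewrite !big_split /=; apply: (le_trans _ (expR_tails_le t_ge1)).
rewrite mulr_natl mulr2n; apply: lerD; last exact: mean_quad_witness_le.
by apply: lerD; apply: mean_lin_witness_le.
Qed.

Lemma collision_estimate : 1 - 10 / 9 * expR (- t) <= prodprob q good_estimate.
Proof.
apply: (le_trans _ (prodprob_ge_1Bmean q_ge0 sum_q witness_ge0 witness_ge1_of_bad)).
by rewrite lerD2l lerN2 mean_witness_le.
Qed.

End CollisionEstimate.

Theorem corollary1 (R : realType) (U : finType) (q : U -> R)
    (hq0 : forall u, 0 <= q u) (hq1 : \sum_(u : U) q u = 1)
    (n : nat) (hn : (24 < n)%N) (h : U -> 'I_n)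
    (eps delta : R) (heps0 : 0 < eps) (heps1 : eps < 1 / 3) (hdelta : 0 < delta)
    (m : nat) (hm : m%:R = eps ^-2 * powR n%:R (1 + delta)) :
  1 - 10 / 9 * expR (- powR n%:R delta) <=
  prodprob q (fun x : {ffun 'I_m -> U} =>
    `| \sum_(i < n) ((kcount h x i * (kcount h x i - 1))%:R / (m%:R * (m%:R - 1)))
         * (pnorm2 q h)^-1 - 1 | <= 22 * eps).
Proof.
have n_ge1 : 1 <= n%:R :> R by rewrite ler1n (leq_trans _ hn).
set t := powR n%:R delta.
have t_ge1 : 1 <= t.
  by rewrite /t -[X in X <= _](powRr0 n%:R); apply: ler_powR => //; apply: ltW.
have eps2m : eps ^+ 2 * m%:R = n%:R * t.
  rewrite hm powRD ?pnatr_eq0 ?gtn_eqF ?(leq_trans _ hn) ?implybT // powRr1 ?ler0n //.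
  by rewrite mulrA mulfV ?mul1r // expf_neq0 // gt_eqF.
exact: (collision_estimate hq0 hq1 h hn heps0 heps1 t_ge1 eps2m).
Qed.
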